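(* Let $K\subset\mathbb{R}^{2n}$ be a centrally symmetric convex body ($K=-K$) satisfying $K=iK$, and let $r>0$ be the largest number such that $rB^{2n}\subset K$. Then $c^Z_{lin}(K)\le 2\pi r^2$.
   Context: A convex body is a bounded convex set with non-empty interior. $\mathbb{R}^{2n}$ with coordinates $(x_1,y_1,\dots,x_n,y_n)$ is identified with $\mathbb{C}^n$, and multiplication by $i$ is the linear map $i(x_1,y_1,\dots,x_n,y_n)=(-y_1,x_1,\dots,-y_n,x_n)$. $B^{2n}$ is the open Euclidean unit ball. The standard symplectic form is $\omega_{st}=\sum_j dx_j\wedge dy_j$ and $\mathrm{Sp}(\mathbb{R}^{2n})$ is the group of linear maps preserving it. $Z^{2n}(r)=\{(x_1,y_1,\dots,x_n,y_n): x_1^2+y_1^2<r^2\}$. The linearized cylindrical capacity is $c^Z_{lin}(U)=\inf\{\pi\rho^2 : \exists\,\psi\in\mathrm{Sp}(\mathbb{R}^{2n}) \text{ with } \psi(U)\subset Z^{2n}(\rho)\}$. *)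

From HB Require Import structures.
From mathcomp Require Import all_boot all_order all_algebra.
From mathcomp Require Import all_classical all_reals all_analysis.
Set Implicit Arguments. Unset Strict Implicit. Unset Printing Implicit Defensive.
Import Order.TTheory GRing.Theory Num.Theory.
Local Open Scope classical_set_scope.
Local Open Scope ring_scope.

(* R^{2n} is 'rV[R]_(2*n), coordinates ordered (x_1,y_1,...,x_n,y_n):
   x_j (j = 1..n) is index 2(j-1), y_j is index 2(j-1)+1. *)

Definition co (R : pzRingType) (m : nat) (v : 'rV[R]_m) (k : nat) : R :=
  match @insub nat (fun i => i < m)%N 'I_m k with Some i => v 0 i | None => 0 end.

(* multiplication by i: i(x_1,y_1,...) = (-y_1,x_1,...) *)
Definition mulI (R : pzRingType) (n : nat) (v : 'rV[R]_(2 * n)) : 'rV[R]_(2 * n) :=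
  \row_(k < 2 * n) (if odd k then co v k.-1 else - co v k.+1).

Definition norm2 (R : pzRingType) (m : nat) (v : 'rV[R]_m) : R :=
  \sum_(k < m) v 0 k ^+ 2.

Definition omega (R : pzRingType) (n : nat) (u v : 'rV[R]_(2 * n)) : R :=
  \sum_(j < n) (co u (2 * j) * co v (2 * j).+1 - co u (2 * j).+1 * co v (2 * j)).

Definition symplectic (R : pzRingType) (n : nat) (A : 'M[R]_(2 * n)) : Prop :=
  forall u v : 'rV[R]_(2 * n), omega (u *m A) (v *m A) = omega u v.

Definition eball (R : numDomainType) (m : nat) (x : 'rV[R]_m) (r : R) : set 'rV[R]_m :=
  [set v | norm2 (v - x) < r ^+ 2].

Definition convex_body (R : numDomainType) (m : nat) (K : set 'rV[R]_m) : Prop :=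
  [/\
      (forall u v t, K u -> K v -> 0 <= t -> t <= 1 -> K ((1 - t) *: u + t *: v)),
      (exists M : R, forall v, K v -> norm2 v <= M) &
      (exists x (e : R), 0 < e /\ eball x e `<=` K)].

Definition cylinder (R : numDomainType) (n : nat) (rho : R) : set 'rV[R]_(2 * n) :=
  [set v | co v 0 ^+ 2 + co v 1 ^+ 2 < rho ^+ 2].

(* linearized cylindrical capacity, as an extended real (inf of empty set = +oo) *)
Definition c_lin_Z (R : realType) (n : nat) (U : set 'rV[R]_(2 * n)) : \bar R :=
  ereal_inf [set ((pi : R) * rho ^+ 2)%:E | rho in
     [set rho : R | 0 < rho /\ exists A : 'M[R]_(2 * n),
        symplectic A /\ [set u *m A | u in U] `<=` @cylinder R n rho]].

From HB Require Import structures.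
From mathcomp Require Import all_boot all_order all_algebra.
From mathcomp Require Import all_classical all_reals all_analysis.
From mathcomp Require Import ring lra zify.
Set Implicit Arguments. Unset Strict Implicit. Unset Printing Implicit Defensive.
Import Order.TTheory GRing.Theory Num.Theory.
Local Open Scope classical_set_scope.
Local Open Scope ring_scope.

(* Since r is maximal, for every eps > 0 the body K lies in a half-space
   <x, u> <= r + eps with |u| = 1 (convexity of K with the inscribed ball).  By K = -K
   and K = iK it then lies in the slabs |<x, u>| <= r + eps and |<x, iu>| <= r + eps.
   A unitary, hence symplectic, map taking the complex line of u onto the first
   coordinate plane sends K into Z(sqrt 2 (r + eps)), so c_lin_Z K <= 2 pi (r + eps)^2. *)

Section Euclidean.
Variables (R : realType) (m : nat).
Implicit Types (u v w : 'rV[R]_m) (a : R).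

Lemma coE v (i : 'I_m) : co v i = v 0 i.
Proof. by rewrite /co; case: insubP => [j _ /val_inj -> //|]; rewrite ltn_ord. Qed.

Lemma co_out v k : (m <= k)%N -> co v k = 0.
Proof. by move=> mk; rewrite /co; case: insubP => [j|//]; rewrite ltnNge mk. Qed.

Lemma coD v w k : co (v + w) k = co v k + co w k.
Proof. by rewrite /co; case: insubP => [j _ _|_]; rewrite ?mxE ?addr0. Qed.

Lemma coZ a v k : co (a *: v) k = a * co v k.
Proof. by rewrite /co; case: insubP => [j _ _|_]; rewrite ?mxE ?mulr0. Qed.

Definition dotv u v : R := (u *m v^T) 0 0.

Lemma dotvE u v : dotv u v = \sum_(k < m) co u k * co v k.
Proof. by rewrite /dotv mxE; apply: eq_bigr => k _; rewrite !coE mxE. Qed.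

Lemma norm2E v : norm2 v = dotv v v.
Proof. by rewrite dotvE /norm2; apply: eq_bigr => k _; rewrite !coE expr2. Qed.

Lemma dotvC u v : dotv u v = dotv v u.
Proof. by rewrite !dotvE; apply: eq_bigr => k _; rewrite mulrC. Qed.

Lemma dotvDl u v w : dotv (u + v) w = dotv u w + dotv v w.
Proof. by rewrite !dotvE -big_split; apply: eq_bigr => k _; rewrite coD mulrDl. Qed.

Lemma dotvZl a u v : dotv (a *: u) v = a * dotv u v.
Proof. by rewrite !dotvE mulr_sumr; apply: eq_bigr => k _; rewrite coZ mulrA. Qed.

Lemma dotvNl u v : dotv (- u) v = - dotv u v.
Proof. by rewrite -scaleN1r dotvZl mulN1r. Qed.

Lemma dotvBl u v w : dotv (u - v) w = dotv u w - dotv v w.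
Proof. by rewrite dotvDl dotvNl. Qed.

Lemma dotvDr u v w : dotv w (u + v) = dotv w u + dotv w v.
Proof. by rewrite dotvC dotvDl ![dotv _ w]dotvC. Qed.

Lemma dotvZr a u v : dotv v (a *: u) = a * dotv v u.
Proof. by rewrite dotvC dotvZl dotvC. Qed.

Lemma dotvNr u v : dotv v (- u) = - dotv v u.
Proof. by rewrite dotvC dotvNl dotvC. Qed.

Lemma dotvBr u v w : dotv w (u - v) = dotv w u - dotv w v.
Proof. by rewrite dotvDr dotvNr. Qed.

Definition dotv_linE := (dotvBl, dotvBr, dotvDl, dotvDr, dotvZl, dotvZr, dotvNl, dotvNr).

Lemma dotvv_ge0 v : 0 <= dotv v v.
Proof. by rewrite -norm2E /norm2; apply: sumr_ge0 => k _; apply: sqr_ge0. Qed.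

Lemma dotvv_eq0 v : dotv v v = 0 -> v = 0.
Proof.
rewrite -norm2E /norm2 => /eqP; rewrite psumr_eq0 => [/allP vanish|k _]; last exact: sqr_ge0.
apply/matrixP => i j; rewrite [i]ord1 mxE; apply/eqP; rewrite -sqrf_eq0.
by apply: (implyP (vanish j _)); rewrite ?mem_index_enum.
Qed.

Definition stdv (k : nat) : 'rV[R]_m := \row_(j < m) ((j : nat) == k)%:R.

Lemma co_stdv k l : co (stdv k) l = ((l == k) && (l < m)%N)%:R.
Proof. by rewrite /co; case: insubP => [j -> jl|/negbTE ->]; rewrite ?mxE ?jl ?andbT ?andbF. Qed.

Lemma dotv_stdv v k : dotv v (stdv k) = co v k.
Proof.
rewrite dotvE; case: (ltnP k m) => km; last first.
  by rewrite co_out // big1 // => j _; rewrite co_stdv ltn_eqF ?mulr0 // (leq_trans _ km).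
rewrite (bigD1 (Ordinal km)) //= co_stdv eqxx km mulr1 big1 ?addr0 // => j jk.
by rewrite co_stdv ltn_ord andbT -[(j : nat) == k]/(j == Ordinal km) (negbTE jk) mulr0.
Qed.

End Euclidean.

Lemma sum_ord_mul2 (V : nmodType) (F : nat -> V) n :
  \sum_(k < 2 * n) F k = \sum_(j < n) (F (2 * j)%N + F (2 * j).+1).
Proof.
rewrite -(big_mkord xpredT F) -(big_mkord xpredT (fun j => F (2 * j)%N + F (2 * j).+1)).
elim: n => [|n IHn]; first by rewrite !big_geq.
rewrite [RHS]big_nat_recr //= -IHn mulnS add2n.
by rewrite !big_nat_recr //= addrA.
Qed.

Lemma even_ltS (j m : nat) : ~~ odd j -> (j < 2 * m)%N -> (j.+1 < 2 * m)%N.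
Proof.
move=> even_j jm; rewrite ltn_neqAle jm andbT; apply: contraNneq even_j => e.
by move: (congr1 odd e); rewrite oddM /= => /negbFE.
Qed.

Section ComplexStructure.
Variables (R : realType) (n : nat).
Implicit Types (u v w : 'rV[R]_(2 * n)) (a : R).

Lemma co_mulI v k : (k < 2 * n)%N ->
  co (mulI v) k = if odd k then co v k.-1 else - co v k.+1.
Proof. by move=> kn; rewrite /co; case: insubP => [j _ jk|]; rewrite ?kn // mxE jk. Qed.

Lemma mulII v : mulI (mulI v) = - v.
Proof.
apply/matrixP => i [[|j] jn]; rewrite [i]ord1 !mxE /=.
  by rewrite co_mulI ?(even_ltS _ jn) //= (coE v (Ordinal jn)).
case: ifP => /= [/negbTE even_j | /negbFE odd_j].
  by rewrite co_mulI ?(ltn_trans _ jn) //= even_j (coE v (Ordinal jn)).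
by rewrite co_mulI ?(even_ltS _ jn) /= ?odd_j //= (coE v (Ordinal jn)).
Qed.

Lemma mulID u v : mulI (u + v) = mulI u + mulI v.
Proof. by apply/matrixP => i j; rewrite !mxE !coD; case: ifP => _; rewrite ?opprD. Qed.

Lemma mulIZ a v : mulI (a *: v) = a *: mulI v.
Proof. by apply/matrixP => i j; rewrite !mxE !coZ; case: ifP => _; rewrite ?mulrN. Qed.

Lemma mulIN v : mulI (- v) = - mulI v.
Proof. by rewrite -scaleN1r mulIZ scaleN1r. Qed.

Lemma mulIB u v : mulI (u - v) = mulI u - mulI v.
Proof. by rewrite mulID mulIN. Qed.

Lemma dotv_mulI u v : dotv (mulI u) (mulI v) = dotv u v.
Proof.
rewrite !dotvE !(sum_ord_mul2 (fun k => co _ k * co _ k)); apply: eq_bigr => -[j jn] _ /=.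
have ? : (2 * j < 2 * n)%N by lia.
have ? : ((2 * j).+1 < 2 * n)%N by lia.
by rewrite !co_mulI //= !oddM /=; ring.
Qed.

Lemma omegaE u v : omega u v = - dotv u (mulI v).
Proof.
rewrite /omega dotvE (sum_ord_mul2 (fun k => co _ k * co _ k)) -sumrN.
apply: eq_bigr => -[j jn] _ /=.
have ? : (2 * j < 2 * n)%N by lia.
have ? : ((2 * j).+1 < 2 * n)%N by lia.
by rewrite !co_mulI //= !oddM /=; ring.
Qed.

Lemma dotv_mulIl u v : dotv (mulI u) v = - dotv u (mulI v).
Proof. by rewrite -{1}dotv_mulI mulII dotvNl. Qed.

Lemma dotv_mulI_self v : dotv v (mulI v) = 0.
Proof. by have := dotv_mulIl v v; rewrite dotvC; lra. Qed.

Lemma mulI_stdv0 : mulI (stdv R (2 * n) 0) = stdv R (2 * n) 1.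
Proof.
apply/matrixP => i [[|[|j]] jn]; rewrite !mxE !co_stdv /=; first by rewrite oppr0.
  by rewrite ltnW.
by case: ifP => _; rewrite ?oppr0.
Qed.

End ComplexStructure.

Lemma mulmx_outer (R : realType) m (v w : 'rV[R]_m) : v *m (w^T *m w) = dotv v w *: w.
Proof. by rewrite mulmxA [v *m w^T]mx11_scalar mul_scalar_mx. Qed.

Section ComplexReflection.
Variables (R : realType) (n : nat).
Implicit Types (u v w : 'rV[R]_(2 * n)).

(* Minus the identity on the complex line spanned by w and i w, the identity on its
   orthogonal complement; the identity when w = 0, since 2 / 0 = 0. *)
Definition creflect w : 'M[R]_(2 * n) :=
  1%:M - (2 / dotv w w) *: (w^T *m w + (mulI w)^T *m mulI w).

Lemma creflectE w v :
  v *m creflect w = v - (2 / dotv w w) *: (dotv v w *: w + dotv v (mulI w) *: mulI w).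
Proof. by rewrite /creflect mulmxBr mulmx1 -scalemxAr mulmxDr !mulmx_outer. Qed.

Lemma mulI_creflect w v : mulI (v *m creflect w) = mulI v *m creflect w.
Proof.
rewrite !creflectE mulIB mulIZ mulID !mulIZ mulII dotv_mulIl dotv_mulI.
by rewrite scalerN scaleNr; congr (_ - _ *: _); rewrite addrC.
Qed.

Lemma dotv_creflect w u v : dotv (u *m creflect w) (v *m creflect w) = dotv u v.
Proof.
have wIw := dotv_mulI_self w.
have Iww : dotv (mulI w) w = 0 by rewrite dotvC.
rewrite !creflectE !dotv_linE wIw Iww dotv_mulI [dotv w v]dotvC [dotv (mulI w) v]dotvC.
have [->|w_neq0] := eqVneq (dotv w w) 0; first by rewrite invr0 mulr0; ring.
by field.
Qed.

Lemma creflect_symplectic w : symplectic (creflect w).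
Proof. by move=> u v; rewrite !omegaE mulI_creflect dotv_creflect. Qed.

Lemma dotv_creflectl w u v : dotv (u *m creflect w) v = dotv u (v *m creflect w).
Proof.
by rewrite !creflectE !dotv_linE [dotv w v]dotvC [dotv (mulI w) v]dotvC; ring.
Qed.

Lemma creflect_unit_to_unit e u :
  dotv e e = 1 -> dotv u u = 1 -> dotv e (mulI u) = 0 -> e *m creflect (u - e) = u.
Proof.
move=> e1 u1 e_Iu; set w := u - e.
have [ww0|w_neq0] := eqVneq (dotv w w) 0.
  have /eqP := dotvv_eq0 ww0; rewrite subr_eq0 => /eqP ue.
  by rewrite creflectE ww0 invr0 mulr0 scale0r subr0 ue.
have e_Iw : dotv e (mulI w) = 0 by rewrite mulIB dotvBr e_Iu dotv_mulI_self subrr.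
have ww : dotv w w = 2 - 2 * dotv e u by rewrite !dotv_linE u1 e1 [dotv u e]dotvC; ring.
have ew : dotv e w = dotv e u - 1 by rewrite dotvBr e1.
rewrite creflectE e_Iw scale0r addr0 scalerA.
have -> : 2 / dotv w w * dotv e w = -1.
  move: w_neq0; rewrite ew ww => w_neq0; field.
  by apply: contra w_neq0 => /eqP eu1; rewrite eu1.
by rewrite scaleN1r opprK /w addrC subrK.
Qed.

End ComplexReflection.

Lemma unit_circle_perp (R : rcfType) (p0 p1 : R) :
  exists a b : R, a ^+ 2 + b ^+ 2 = 1 /\ b * p0 = a * p1.
Proof.
have [p_eq0|p_neq0] := eqVneq (p0 ^+ 2 + p1 ^+ 2) 0.
  have p1_eq0 : p1 = 0 by apply/eqP; rewrite -sqrf_eq0; apply/eqP; nra.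
  by exists 1, 0; rewrite p1_eq0; split; ring.
set rho := Num.sqrt (p0 ^+ 2 + p1 ^+ 2).
have rho2 : rho ^+ 2 = p0 ^+ 2 + p1 ^+ 2 by rewrite sqr_sqrtr // addr_ge0 // sqr_ge0.
have rho_neq0 : rho != 0 by apply: contra p_neq0 => /eqP rho0; rewrite -rho2 rho0 expr0n.
exists (p0 / rho), (p1 / rho); split; last by field.
by rewrite !expr_div_n -mulrDl -rho2 divff // expf_neq0.
Qed.

Lemma symplectic_first_coords (R : realType) n (u : 'rV[R]_(2 * n)) :
  (0 < n)%N -> dotv u u = 1 ->
  exists A, symplectic A /\ forall v,
    co (v *m A) 0 ^+ 2 + co (v *m A) 1 ^+ 2 = dotv v u ^+ 2 + dotv v (mulI u) ^+ 2.
Proof.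
move=> n_gt0 u1; have n0 : (0 < 2 * n)%N by lia.
have n1 : (1 < 2 * n)%N by lia.
have [a [b [ab1 ab_perp]]] := unit_circle_perp (co u 0) (co u 1).
pose e0 := stdv R (2 * n) 0; pose e1 := stdv R (2 * n) 1.
have Ie0 : mulI e0 = e1 by apply: mulI_stdv0.
have Ie1 : mulI e1 = - e0 by rewrite -Ie0 mulII.
pose e := a *: e0 + b *: e1.
have e_unit : dotv e e = 1.
  by rewrite !dotv_linE !dotv_stdv !co_stdv /= n0 n1 /=; nra.
have e_Iu : dotv e (mulI u) = 0.
  rewrite !dotv_linE ![dotv _ (mulI u)]dotvC !dotv_stdv !co_mulI //= ab_perp; ring.
have eA : e *m creflect (u - e) = u by apply: creflect_unit_to_unit.
have e0_def : e0 = a *: e - b *: mulI e.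
  rewrite mulID !mulIZ Ie0 Ie1; apply/matrixP => i j; rewrite !mxE -[LHS]mul1r -ab1; ring.
have e0A : e0 *m creflect (u - e) = a *: u - b *: mulI u.
  by rewrite e0_def mulmxBl -!scalemxAl -mulI_creflect eA.
have e1A : e1 *m creflect (u - e) = a *: mulI u + b *: u.
  by rewrite -Ie0 -mulI_creflect e0A mulIB !mulIZ mulII scalerN opprK.
exists (creflect (u - e)); split => [|v]; first exact: creflect_symplectic.
rewrite -!dotv_stdv !dotv_creflectl -/e0 -/e1 e0A e1A !dotv_linE -[RHS]mul1r -ab1; ring.
Qed.

Section ConvexBody.
Variables (R : realType) (m : nat) (K : set 'rV[R]_m) (r : R).
Hypotheses (K_body : convex_body K) (ball_sub : eball 0 r `<=` K).

Lemma eball0E (v : 'rV[R]_m) s : eball 0 s v = (dotv v v < s ^+ 2).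
Proof. by rewrite /eball /= subr0 norm2E. Qed.

Lemma convex_ball_hull (q x : 'rV[R]_m) (t : R) : K x -> 0 <= t < 1 ->
  dotv (q - t *: x) (q - t *: x) < r ^+ 2 * (1 - t) ^+ 2 -> K q.
Proof.
case: K_body => convK _ _ Kx /andP[t_ge0 t_lt1] near_q.
have t1_gt0 : 0 < 1 - t by rewrite subr_gt0.
pose y := (1 - t)^-1 *: (q - t *: x).
have -> : q = (1 - t) *: y + t *: x by rewrite /y scalerA divff ?gt_eqF // scale1r subrK.
apply: convK => //; [apply: ball_sub | exact: ltW].
by rewrite eball0E dotvZl dotvZr mulrA -expr2 exprVn mulrC ltr_pdivrMr ?exprn_gt0.
Qed.

Hypothesis r_max : forall s, r < s -> ~ eball 0 s `<=` K.

Lemma outside_point_near_inradius s : r < s ->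
  exists q, ~ K q /\ r ^+ 2 <= dotv q q < s ^+ 2.
Proof.
move=> rs; have [q qs qK] : exists2 q, eball 0 s q & ~ K q.
  by apply: contra_notP (r_max rs) => no_q q qs; apply: contrapT => qK; apply: no_q; exists q.
rewrite eball0E in qs; exists q; split => //; rewrite qs andbT leNgt; apply/negP => qr.
by apply: qK; apply: ball_sub; rewrite eball0E.
Qed.

(* Take q outside K with |q|^2 < r^2 + t r eps and u = q / |q|.  A point x of K with
   <x, u> > r + eps would put q in the hull of x and the inscribed ball, the point
   (q - t x) / (1 - t) being in the ball since t |x|^2 <= r eps. *)
Lemma slab_near_inradius eps : 0 < r -> 0 < eps ->
  exists u, dotv u u = 1 /\ forall x, K x -> dotv x u <= r + eps.
Proof.
move=> r_gt0 eps_gt0; case: (K_body) => _ [M K_bounded] _.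
have M_ge0 : 0 <= M.
  apply: le_trans (K_bounded 0 _); first by rewrite norm2E dotvv_ge0.
  by apply: ball_sub; rewrite eball0E /dotv mul0mx mxE exprn_gt0.
pose M' := M + r * eps + 1; have M'_gt0 : 0 < M' by rewrite /M'; nra.
pose t := r * eps / M'; have tM' : t * M' = r * eps by rewrite mulfVK ?gt_eqF.
have t_gt0 : 0 < t by rewrite divr_gt0 ?mulr_gt0.
have t_lt1 : t < 1 by rewrite -(ltr_pM2r M'_gt0) tM' mul1r /M'; lra.
pose s := Num.sqrt (r ^+ 2 + t * r * eps).
have tre_gt0 : 0 < t * r * eps by do 2?apply: mulr_gt0.
have s2 : s ^+ 2 = r ^+ 2 + t * r * eps by rewrite sqr_sqrtr // addr_ge0 ?sqr_ge0 ?ltW.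
have r_ge0 := ltW r_gt0.
have rs : r < s by rewrite -(ltr_pXn2r (n := 2)) ?nnegrE ?sqrtr_ge0 // s2 ltrDl.
have [q [qK /andP[rq qs]]] := outside_point_near_inradius rs.
pose N := Num.sqrt (dotv q q).
have N2 : N ^+ 2 = dotv q q by rewrite sqr_sqrtr // dotvv_ge0.
have rN : r <= N by rewrite -(ler_pXn2r (n := 2)) ?nnegrE ?sqrtr_ge0 // N2.
have N_gt0 : 0 < N by apply: lt_le_trans rN.
exists (N^-1 *: q); split; first by rewrite dotvZl dotvZr -N2; field; rewrite gt_eqF.
move=> x Kx; rewrite leNgt; apply/negP => x_far; apply: qK.
apply: (convex_ball_hull Kx (t := t)); first by rewrite ltW.
have qx : r * (r + eps) < dotv q x.
  have -> : dotv q x = N * dotv x (N^-1 *: q).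
    by rewrite dotvZr dotvC mulrA divff ?mul1r ?gt_eqF.
  nra.
have xx : t * t * dotv x x <= t * r * eps.
  have xM' : dotv x x <= M' by rewrite -norm2E /M'; have := K_bounded x Kx; nra.
  have -> : t * r * eps = t * t * M' by rewrite -mulrA -tM' mulrA.
  by rewrite ler_pM2l //; apply: mulr_gt0.
rewrite !dotv_linE [dotv x q]dotvC; nra.
Qed.

End ConvexBody.

Lemma c_lin_Z_le (R : realType) n (U : set 'rV[R]_(2 * n)) (A : 'M[R]_(2 * n)) rho :
  0 < rho -> symplectic A -> [set u *m A | u in U] `<=` cylinder rho ->
  (c_lin_Z U <= (pi * rho ^+ 2)%:E)%E.
Proof.
by move=> rho_gt0 A_sympl UA; apply: ereal_inf_lbound; exists rho => //; split => //; exists A.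
Qed.

Lemma c_lin_Z_le_slab (R : realType) n (K : set 'rV[R]_(2 * n)) (u : 'rV[R]_(2 * n)) b b' :
  (0 < n)%N -> K = [set - v | v in K] -> K = [set mulI v | v in K] ->
  dotv u u = 1 -> (forall x, K x -> dotv x u <= b) -> 0 <= b < b' ->
  (c_lin_Z K <= (2 * pi * b' ^+ 2)%:E)%E.
Proof.
move=> n_gt0 K_sym K_I u1 slab /andP[b_ge0 bb'].
have slab_u x : K x -> dotv x u ^+ 2 <= b ^+ 2.
  move=> Kx; have := slab x Kx; have : K (- x) by rewrite K_sym; exists x.
  by move=> /slab; rewrite dotvNl; nra.
have slab_Iu x : K x -> dotv x (mulI u) ^+ 2 <= b ^+ 2.
  by rewrite {1}K_I => -[y Ky <-]; rewrite dotv_mulI; apply: slab_u.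
have [A [A_sympl A_coords]] := symplectic_first_coords n_gt0 u1.
pose rho := b' * Num.sqrt 2.
have rho2 : rho ^+ 2 = 2 * b' ^+ 2 by rewrite exprMn sqr_sqrtr // mulrC.
have -> : 2 * pi * b' ^+ 2 = pi * rho ^+ 2 by rewrite rho2; ring.
apply: (c_lin_Z_le (A := A)) => //; first by rewrite mulr_gt0 ?sqrtr_gt0 // (le_lt_trans b_ge0).
move=> _ [x Kx <-]; rewrite /cylinder /= A_coords rho2.
by have := slab_u x Kx; have := slab_Iu x Kx; nra.
Qed.

Theorem mainTheorem3 (R : realType) (n : nat) (K : set 'rV[R]_(2 * n)) (r : R) :
  (0 < n)%N ->
  convex_body K ->
  K = [set - v | v in K] ->
  K = [set mulI v | v in K] ->
  0 < r ->
  eball 0 r `<=` K ->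
  (forall s : R, r < s -> ~ (eball 0 s `<=` K)) ->
  (c_lin_Z K <= (2 * pi * r ^+ 2)%:E)%E.
Proof.
move=> n_gt0 K_body K_sym K_I r_gt0 ball_sub r_max.
apply/lee_addgt0Pr => d d_gt0.
have pir_gt0 : 0 < 12 * pi * r by rewrite !mulr_gt0 ?pi_gt0.
pose eps := Num.min (r / 2) (d / (12 * pi * r)).
have eps_gt0 : 0 < eps by rewrite lt_min !divr_gt0.
have eps_r : eps <= r / 2 by rewrite ge_min lexx.
have eps_d : eps * (12 * pi * r) <= d by rewrite -ler_pdivlMr // ge_min lexx orbT.
have [u [u1 slab]] := slab_near_inradius K_body ball_sub r_max r_gt0 eps_gt0.
apply: le_trans (c_lin_Z_le_slab (b' := r + 2 * eps) n_gt0 K_sym K_I u1 slab _) _.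
  by apply/andP; split; lra.
by rewrite lee_fin; have := pi_gt0 R; nra.
Qed.
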